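(* Let $F(n)$ be the Fibonacci sequence, $F(0)=0$, $F(1)=1$, $F(n+2)=F(n+1)+F(n)$. Then $$\lim_{\alpha\to\infty}\frac{|\{F(n)\bmod 11^\alpha:n\ge0\}|}{11^\alpha}=\frac{145}{264}.$$ *)

From HB Require Import structures.
From mathcomp Require Import all_boot all_order all_algebra.
From mathcomp Require Import finmap.
From mathcomp Require Import all_classical all_reals all_analysis.
Set Implicit Arguments. Unset Strict Implicit. Unset Printing Implicit Defensive.

Fixpoint fib (n : nat) : nat :=
  match n with
  | 0 => 0
  | 1 => 1
  | (m.+1 as k).+1 => fib k + fib m
  end.

Definition fib_residues (m : nat) : set nat := [set fib n %% m | n in [set: nat]].

(* its cardinality (it is finite, being contained in [0, m)) *)
Definition num_fib_residues (m : nat) : nat := #|` fset_set (fib_residues m)|.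

(* The Fibonacci sequence has period 10 modulo 11, and F(10 11^b) = 5 11^(b+1),
   F(10 11^b + 1) = 1 + 8 11^(b+1) modulo 11^(b+2).  Hence translating n by
   k 10 11^b moves F(n) by k 11^(b+1) (5 F(n+1) + 3 F(n)) modulo 11^(b+2), and a
   Hensel argument applies on every class n = j (mod 10) whose slope
   5 F(j+1) + 3 F(j) is prime to 11: that is every j but 5, and these classes
   reach exactly the lifts of six residues mod 11, i.e. 6 11^a residues mod
   11^(a+1).  On the class n = 5 (mod 10), n is odd, L(n)^2 = 5 F(n)^2 - 4 and
   11 | L(n); r |-> 5 r^2 - 4 is injective on residues = 5 (mod 11) while the
   Lucas numbers do lift along that class, so these residues are counted by the
   squares of multiples of 11 modulo 11^(a+1), i.e. by the squares modulo
   11^(a-1).  Counting squares modulo powers of 11 (five unit squares mod 11,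
   Hensel again) shows that 264 times the number of residues mod 11^a is
   145 11^a + O(1). *)

From HB Require Import structures.
From mathcomp Require Import all_boot all_order all_algebra.
From mathcomp Require Import finmap.
From mathcomp Require Import all_classical all_reals all_analysis.
From mathcomp Require Import ring zify.
Import Order.TTheory GRing.Theory Num.Theory.

Set Implicit Arguments.
Unset Strict Implicit.
Unset Printing Implicit Defensive.

Definition fib_like (G : nat -> nat) := forall n, G n.+2 = G n.+1 + G n.

Fixpoint lucas (n : nat) : nat :=
  match n with
  | 0 => 2
  | 1 => 1
  | (m.+1 as k).+1 => lucas k + lucas m
  end.

Lemma fib_like_fib : fib_like fib. Proof. by []. Qed.
Lemma fib_like_lucas : fib_like lucas. Proof. by []. Qed.

Lemma fib_like_add G m n : fib_like G ->
  G (n + m.+1) = fib m.+1 * G n.+1 + fib m * G n.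
Proof.
move=> hG; elim: m n => [|m IHm] n; first by rewrite addn1 mul1n mul0n addn0.
by rewrite -addSnnS IHm hG fib_like_fib; lia.
Qed.

Lemma lucasS n : lucas n.+1 = fib n + fib n.+2.
Proof.
elim/ltn_ind: n => [[|[|n]]] IHn //.
by rewrite fib_like_lucas !IHn // !fib_like_fib; lia.
Qed.

Local Open Scope ring_scope.

Lemma fib_like_addZ G m n : fib_like G ->
  (G (n + m)%N)%:Z = (fib m)%:Z * (G n.+1)%:Z + ((fib m.+1)%:Z - (fib m)%:Z) * (G n)%:Z.
Proof.
move=> hG; case: m => [|m]; first by rewrite addn0 /=; ring.
by rewrite fib_like_add // fib_like_fib !PoszD !PoszM; ring.
Qed.

Lemma fib_cassini n : (fib n.+2 * fib n)%:Z - (fib n.+1)%:Z ^+ 2 = (-1) ^+ n.+1.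
Proof.
elim: n => [|n IHn] //.
by rewrite [RHS]exprS -IHn !PoszM !fib_like_fib !PoszD; ring.
Qed.

Lemma lucas_sqr_odd n : odd n -> (5 * fib n ^ 2 = lucas n ^ 2 + 4)%N.
Proof.
case: n => [|n] // odd_n; rewrite lucasS fib_like_fib.
by have := fib_cassini n; rewrite -signr_odd odd_n expr1 fib_like_fib expr2; nia.
Qed.

(** * Hensel lifting of residues *)

Lemma PoszX m n : (m ^ n)%N%:Z = m%:Z ^+ n.
Proof. by rewrite -!natz natrX. Qed.

Lemma dvdz_mod_nat (a b d : nat) : (d%:Z %| a%:Z - b%:Z)%Z = (a == b %[mod d])%N.
Proof. by rewrite -eqz_mod_dvd !modz_nat eqz_nat. Qed.

Lemma exists_dvdz_addM p (e : int) c : prime p -> ~~ (p %| c)%N ->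
  exists k : nat, (p%:Z %| e + k%:Z * c%:Z)%Z.
Proof.
move=> p_pr p_c; have [u [v Bezout_uv]] := Bezoutz c%:Z p%:Z.
have cop : gcdz c p = 1.
  have /eqP cop : coprime c p by rewrite coprime_sym prime_coprime.
  by rewrite /gcdz /= cop.
have uc : u * c%:Z = 1 - v * p%:Z by rewrite -cop -Bezout_uv; ring.
have p_gt0 : 0 < p%:Z by rewrite ltz_nat prime_gt0.
have [q [k [eu k_ge0]]] : exists q k, - e * u = q * p%:Z + k /\ 0 <= k.
  by exists ((- e * u) %/ p)%Z, ((- e * u) %% p)%Z; rewrite -divz_eq modz_ge0 ?gt_eqF.
exists `|k|%N; rewrite gez0_abs //; apply/dvdzP; exists (e * v - q * c%:Z).
have -> : k = - e * u - q * p by rewrite eu addrC addKr.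
by rewrite mulrBl -mulrA uc; ring.
Qed.

Definition reached (G : nat -> nat) (X : pred nat) (m r : nat) : bool :=
  `[< exists2 n, X n & G n = r %[mod m] >].

Lemma reached_modn (G : nat -> nat) (X : pred nat) m r :
  reached G X m (r %% m) = reached G X m r.
Proof. by rewrite /reached modn_mod. Qed.

Lemma reached_dvdn (G : nat -> nat) (X : pred nat) d m r :
  (d %| m)%N -> reached G X m r -> reached G X d r.
Proof.
move=> d_m /asboolP[n Xn Gn_r]; apply/asboolP; exists n => //.
by rewrite -(modn_dvdm _ d_m) Gn_r modn_dvdm.
Qed.

(* Along the translates [n + k P], [G] moves mod [p m] by [k m] times a slope
   [c n] prime to [p], so some [k] corrects the error [G n - r] mod [p m]. *)
Lemma reached_lift (p m P : nat) (G c : nat -> nat) (X : pred nat) r : prime p ->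
  (forall n k, X n -> X (n + k * P)%N) ->
  (forall n k, X n -> G (n + k * P) = G n + k * m * c n %[mod p * m])%N ->
  (forall n, X n -> ~~ (p %| c n))%N ->
  reached G X m r -> reached G X (p * m) r.
Proof.
move=> p_pr XP GP cP /asboolP[n Xn /eqP]; rewrite -dvdz_mod_nat => /dvdzP[e Gn_r].
have [k p_ek] := exists_dvdz_addM e p_pr (cP n Xn).
apply/asboolP; exists (n + k * P)%N; first exact: XP.
apply/eqP; rewrite -dvdz_mod_nat; have /eqP := GP n k Xn; rewrite -!dvdz_mod_nat => GP_nk.
have Gn : (G n)%:Z = r%:Z + e * m%:Z by rewrite -Gn_r; ring.
have -> : (G (n + k * P)%N)%:Z - r%:Z = (G (n + k * P)%N)%:Z - (G n + k * m * c n)%N%:Z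
                                        + (e + k%:Z * (c n)%:Z) * m%:Z.
  by rewrite !PoszD !PoszM Gn; ring.
by rewrite rpredD // PoszM dvdz_mul.
Qed.

Lemma reached_pow_lift p (G P c : nat -> nat) (X : pred nat) a r : prime p ->
  (forall b n k, X n -> X (n + k * P b)%N) ->
  (forall b n k, X n -> G (n + k * P b) = G n + k * p ^ b.+1 * c n %[mod p ^ b.+2])%N ->
  (forall n, X n -> ~~ (p %| c n))%N ->
  reached G X (p ^ a.+1) r = reached G X p r.
Proof.
move=> p_pr XP GP cP; elim: a => [|a IHa]; first by rewrite expn1.
rewrite -IHa; apply/idP/idP; first by apply: reached_dvdn; rewrite dvdn_exp2l.
rewrite [(p ^ a.+2)%N]expnS; apply: (reached_lift p_pr (XP a) _ cP) => n k Xn.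
by rewrite -expnS; apply: GP.
Qed.

(** * The Fibonacci sequence modulo powers of 11 *)

Lemma fib_like_mod11_period G n q : fib_like G -> (G (n + q * 10) = G n %[mod 11])%N.
Proof.
move=> hG; elim: q => [|q IHq]; first by rewrite addn0.
rewrite mulSn addnCA addnC fib_like_add // -IHq; set x := (n + q * 10)%N.
have -> : (fib 10 * G x.+1 + fib 9 * G x = (5 * G x.+1 + 3 * G x) * 11 + G x)%N.
  by rewrite /=; lia.
by rewrite modnMDl.
Qed.

Lemma fib_like_mod11 G n : fib_like G -> (G n = G (n %% 10) %[mod 11])%N.
Proof. by move=> hG; rewrite {1}(divn_eq n 10) addnC fib_like_mod11_period. Qed.

(* With [Q^P = 1 + e A] for the Fibonacci matrix [Q], [fib (k P)] and
   [fib (k P + 1)] are entries of [(1 + e A)^k]: its binomial expansion to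
   second order. *)
Lemma fib_mul_expansion (e U W : int) P k :
  (fib P)%:Z = e * U -> (fib P.+1)%:Z = 1 + e * W ->
  exists s t : int,
    (fib (k * P))%:Z = k%:Z * e * U + 'C(k, 2)%:Z * e ^+ 2 * (2 * U * W - U ^+ 2)
                       + e ^+ 3 * s /\
    (fib (k * P).+1)%:Z = 1 + k%:Z * e * W + 'C(k, 2)%:Z * e ^+ 2 * (U ^+ 2 + W ^+ 2)
                          + e ^+ 3 * t.
Proof.
move=> fibP fibP1; elim: k => [|k [s [t [fib_kP fib_kP1]]]].
  by exists 0, 0; rewrite mul0n bin0n /=; split; ring.
exists (s + 'C(k, 2)%:Z * (U * (U ^+ 2 + W ^+ 2) + (W - U) * (2 * U * W - U ^+ 2))
          + e * (U * t + (W - U) * s)).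
exists (t + 'C(k, 2)%:Z * (U * (2 * U * W - U ^+ 2) + W * (U ^+ 2 + W ^+ 2))
          + e * (U * s + W * t)).
rewrite binS bin1 PoszD mulSnr.
have -> : ((k * P + P).+1 = (k * P).+1 + P)%N by rewrite addSn.
rewrite !(fib_like_addZ _ _ fib_like_fib) fib_like_fib PoszD fibP fibP1 fib_kP fib_kP1.
by rewrite -[k.+1]addn1 PoszD; split; ring.
Qed.

Lemma fib_pisano_period_11pow b : exists u w : int,
  (fib (10 * 11 ^ b))%:Z = 11 ^+ b.+1 * (5 + 11 * u) /\
  (fib (10 * 11 ^ b).+1)%:Z = 1 + 11 ^+ b.+1 * (8 + 11 * w).
Proof.
elim: b => [|b [u [w [fibP fibP1]]]]; first by exists 0, 0.
have -> : (10 * 11 ^ b.+1 = 11 * (10 * 11 ^ b))%N by rewrite expnS mulnCA.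
have [s [t [-> ->]]] := fib_mul_expansion 11 fibP fibP1.
set U := 5 + 11 * u; set W := 8 + 11 * w; set d : int := 11 ^+ b.
exists (u + 5 * d * (2 * U * W - U ^+ 2) + d ^+ 2 * s).
exists (w + 5 * d * (U ^+ 2 + W ^+ 2) + d ^+ 2 * t).
by rewrite (_ : 'C(11, 2) = 55)%N // !exprS -/d /U /W; split; ring.
Qed.

(* The constants are [F(P) / 11^(b+1) = 5] and [(F(P+1) - F(P)) / 11^(b+1) = 3]
   modulo 11, for the period [P = 10 11^b]. *)
Definition fib_slope (G : nat -> nat) (n : nat) : nat := 5 * G n.+1 + 3 * G n.

Lemma fib_like_shift_11pow G b n k : fib_like G ->
  (G (n + k * (10 * 11 ^ b)) = G n + k * 11 ^ b.+1 * fib_slope G n %[mod 11 ^ b.+2])%N.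
Proof.
move=> hG; have [u [w [fibP fibP1]]] := fib_pisano_period_11pow b.
have [s [t [fib_kP fib_kP1]]] := fib_mul_expansion k fibP fibP1.
apply/eqP; rewrite -dvdz_mod_nat; apply/dvdzP.
set U := 5 + 11 * u; set W := 8 + 11 * w; set d : int := 11 ^+ b.
set A := 2 * U * W - U ^+ 2; set B := U ^+ 2 + W ^+ 2; set C := 'C(k, 2)%:Z.
exists ((k%:Z * u + d * (C * A + 11 * d * s)) * (G n.+1)%:Z
        + (k%:Z * (w - u) + d * (C * (B - A) + 11 * d * (t - s))) * (G n)%:Z).
rewrite fib_like_addZ // fib_kP fib_kP1 /fib_slope !PoszD !PoszM !PoszX !exprS -/d.
by rewrite /A /B /C /U /W; ring.
Qed.

Lemma fib_slope_mod11 G n : fib_like G ->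
  (fib_slope G n = fib_slope G (n %% 10) %[mod 11])%N.
Proof.
move=> hG; have n_eq : n = (n %% 10 + n %/ 10 * 10)%N by rewrite addnC -divn_eq.
rewrite /fib_slope -modnDm -(modnMmr 5) -(modnMmr 3) [in LHS]n_eq -addSn.
by rewrite !fib_like_mod11_period // !modnMmr modnDm.
Qed.

Definition mod10_class (j : nat) : pred nat := fun n => (n %% 10 == j)%N.

Lemma reached_fib_like_class_mod11 G j r : fib_like G -> (j < 10)%N ->
  reached G (mod10_class j) 11 r = (r == G j %[mod 11])%N.
Proof.
move=> hG j_lt; apply/asboolP/idP => [[n /eqP <- /esym/eqP]|/eqP r_j].
  by rewrite -fib_like_mod11.
by exists j; rewrite // /mod10_class /= modn_small.
Qed.

Lemma reached_fib_like_class G j a r : fib_like G -> (j < 10)%N ->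
  ~~ (11 %| fib_slope G j)%N ->
  reached G (mod10_class j) (11 ^ a.+1) r = (r == G j %[mod 11])%N.
Proof.
move=> hG j_lt slope_j; rewrite -reached_fib_like_class_mod11 //.
apply: (@reached_pow_lift 11 G (fun b => 10 * 11 ^ b)%N (fib_slope G)) => //.
- by move=> b n k; rewrite /mod10_class mulnCA mulnC addnC modnMDl.
- by move=> b n k _; apply: fib_like_shift_11pow.
- by move=> n /eqP n_j; rewrite /dvdn fib_slope_mod11 // n_j.
Qed.

Local Open Scope nat_scope.

Definition num_reached (G : nat -> nat) (X : pred nat) (m : nat) : nat :=
  count (reached G X m) (iota 0 m).

Lemma reached_periodic (G : nat -> nat) (X : pred nat) m r : 0 < m ->
  (forall y, G (y %% m) = G y %[mod m]) -> (forall y, X (y %% m) = X y) ->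
  reached G X m r = has (fun y => X y && (G y == r %[mod m])) (iota 0 m).
Proof.
move=> m_gt0 G_m X_m; apply/asboolP/hasP => [[y Xy /eqP Gy_r]|[y _ /andP[Xy /eqP]]].
  by exists (y %% m); rewrite ?mem_iota ?ltn_mod // X_m G_m Xy.
by exists y.
Qed.

Lemma count_iota_periodic (P : pred nat) m q : (forall r, P (r %% m) = P r) ->
  count P (iota 0 (q * m)) = q * count P (iota 0 m).
Proof.
move=> P_m; elim: q => [|q IHq] //.
rewrite mulSnr iotaD count_cat IHq add0n -[q * m]addn0 iotaDl count_map mulSnr.
by congr (_ + _); apply: eq_count => x; rewrite /= -P_m modnMDl P_m.
Qed.

Lemma count_predU_disj T (a b : pred T) s : (forall x, ~~ (a x && b x)) ->
  count (predU a b) s = count a s + count b s.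
Proof.
move=> ab_disj; rewrite -count_predUI (@eq_count _ (predI a b) pred0) ?count_pred0 ?addn0 //.
by move=> x /=; apply/negbTE.
Qed.

Lemma count_iota_bij m1 m2 (A B : pred nat) (g : nat -> nat) :
  {in [pred i | (i < m1) && A i] &, injective g} ->
  (forall i, i < m1 -> A i -> g i < m2 /\ B (g i)) ->
  (forall j, j < m2 -> B j -> exists2 i, (i < m1) && A i & g i = j) ->
  count A (iota 0 m1) = count B (iota 0 m2).
Proof.
move=> g_inj gAB gBA; rewrite -!size_filter -(size_map g).
apply/perm_size/uniq_perm; rewrite ?filter_uniq ?iota_uniq //.
  rewrite map_inj_in_uniq ?filter_uniq ?iota_uniq // => x y.
  by rewrite !mem_filter !mem_iota /= !add0n => Ax Ay; apply: g_inj; rewrite inE /= andbC.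
move=> y; rewrite mem_filter mem_iota /= add0n; apply/mapP/andP => [[x]|[By y_lt]].
  by rewrite mem_filter mem_iota /= add0n => /andP[Ax x_lt] ->; case: (gAB x x_lt Ax).
have [x /andP[x_lt Ax] <-] := gBA y y_lt By.
by exists x; rewrite // mem_filter mem_iota /= add0n Ax.
Qed.

(** * Squares modulo prime powers *)

Local Notation sqrn := (fun y : nat => y ^ 2).
Local Notation prime_to p := (fun y : nat => ~~ (p %| y)).
Local Notation sqrn_mul p := (fun l : nat => (p * l) ^ 2).

Definition num_squares (m : nat) : nat := num_reached sqrn predT m.

Lemma reached_unit_sqr_lift p a r : prime p -> odd p ->
  reached sqrn (prime_to p) (p ^ a.+1) r = reached sqrn (prime_to p) p r.
Proof.
move=> p_pr p_odd; apply: (@reached_pow_lift p _ (fun b => p ^ b.+1) (muln 2)) => //.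
- by move=> b n k; rewrite dvdn_addl // dvdn_mull // expnS dvdn_mulr.
- move=> b n k _.
  have -> : (n + k * p ^ b.+1) ^ 2 =
            k ^ 2 * p ^ b * p ^ b.+2 + (n ^ 2 + k * p ^ b.+1 * (2 * n)).
    by rewrite !expnS; ring.
  by rewrite modnMDl.
- move=> n p_n; rewrite Euclid_dvdM // negb_or p_n andbT dvdn_prime2 //.
  by apply: contraL p_odd => /eqP ->.
Qed.

Lemma reached_sqr_split p m r :
  reached sqrn predT m r = reached sqrn (prime_to p) m r || reached (sqrn_mul p) predT m r.
Proof.
apply/asboolP/orP => [[y _ y_r]|[|] /asboolP[y _ y_r]]; [|by exists y|by exists (p * y)].
have [/dvdnP[l y_eq]|p_y] := boolP (p %| y).
  by right; apply/asboolP; exists l; rewrite // mulnC -y_eq.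
by left; apply/asboolP; exists y.
Qed.

Lemma reached_sqr_disj p m r : prime p -> p %| m ->
  ~~ (reached sqrn (prime_to p) m r && reached (sqrn_mul p) predT m r).
Proof.
move=> p_pr p_m; apply/negP => /andP[/asboolP[y p_y y_r] /asboolP[l _ l_r]].
suff : p %| y ^ 2 by rewrite Euclid_dvdX // (negbTE p_y).
by rewrite /dvdn -(modn_dvdm _ p_m) y_r -l_r modn_dvdm // expnMn expnS -mulnA modnMr.
Qed.

Lemma num_squares_split p m : prime p -> p %| m ->
  num_squares m = num_reached sqrn (prime_to p) m + num_reached (sqrn_mul p) predT m.
Proof.
move=> p_pr p_m; rewrite /num_squares /num_reached -count_predU_disj.
  by apply: eq_count => r; apply: reached_sqr_split.
by move=> r; apply: reached_sqr_disj.
Qed.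

Lemma num_reached_unit_sqr p a : prime p -> odd p ->
  num_reached sqrn (prime_to p) (p ^ a.+1) = p ^ a * num_reached sqrn (prime_to p) p.
Proof.
move=> p_pr p_odd.
rewrite /num_reached (eq_count (fun r => reached_unit_sqr_lift a r p_pr p_odd)).
by rewrite expnSr count_iota_periodic // => r; apply: reached_modn.
Qed.

Lemma num_reached_sqr_mul_prime p : 0 < p -> num_reached (sqrn_mul p) predT p = 1.
Proof.
move=> p_gt0; rewrite /num_reached (@eq_in_count _ _ (pred1 0)).
  by rewrite count_uniq_mem ?iota_uniq // mem_iota add0n p_gt0.
move=> r; rewrite mem_iota add0n /= => r_lt; apply/asboolP/eqP => [[l _ /esym]|->].
  by rewrite expnMn expnS -mulnA modnMr modn_small.
by exists 0; rewrite ?muln0.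
Qed.

Lemma num_reached_sqr_mul p a : 0 < p ->
  num_reached (sqrn_mul p) predT (p ^ a.+2) = num_squares (p ^ a).
Proof.
move=> p_gt0; have pa2 : p ^ a.+2 = p ^ 2 * p ^ a by rewrite -expnD add2n.
have p2_gt0 : 0 < p ^ 2 by rewrite expn_gt0 p_gt0.
have pa_gt0 : 0 < p ^ a by rewrite expn_gt0 p_gt0.
symmetry; apply: (@count_iota_bij _ _ _ _ (muln (p ^ 2))).
- by move=> x y _ _ /eqP; rewrite eqn_pmul2l // => /eqP.
- move=> x x_lt /asboolP[y _ y_x]; rewrite pa2 ltn_pmul2l //.
  split=> //; apply/asboolP; exists y => //.
  by rewrite expnMn -!muln_modr // y_x.
- move=> j j_lt /asboolP[l _ l_j]; exists (l ^ 2 %% p ^ a).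
    by rewrite ltn_mod pa_gt0; apply/asboolP; exists l; rewrite ?modn_mod.
  by rewrite muln_modr // -pa2 -expnMn l_j modn_small.
Qed.

Lemma num_squares1 : num_squares 1 = 1.
Proof.
have reached0 : reached sqrn predT 1 0 by apply/asboolP; exists 0.
by rewrite /num_squares /num_reached /= reached0.
Qed.

Lemma num_squares_prime p : prime p ->
  num_squares p = num_reached sqrn (prime_to p) p + 1.
Proof.
by move=> p_pr; rewrite (num_squares_split p_pr) // num_reached_sqr_mul_prime ?prime_gt0.
Qed.

Lemma num_squares_pow_rec p a : prime p -> odd p ->
  num_squares (p ^ a.+2) = p ^ a.+1 * num_reached sqrn (prime_to p) p + num_squares (p ^ a).
Proof.
move=> p_pr p_odd; rewrite (num_squares_split p_pr) ?dvdn_exp //.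
by rewrite num_reached_unit_sqr // num_reached_sqr_mul ?prime_gt0.
Qed.

Lemma num_unit_sqr_11 : num_reached sqrn (prime_to 11) 11 = 5.
Proof.
have unit_sqr r : reached sqrn (prime_to 11) 11 r =
    has (fun y => ~~ (11 %| y) && (y ^ 2 == r %[mod 11])) (iota 0 11).
  by apply: reached_periodic => // y; rewrite ?modnXm // /dvdn modn_mod.
by rewrite /num_reached (eq_count unit_sqr).
Qed.

Lemma num_squares_11pow a :
  24 * num_squares (11 ^ a) = 11 ^ a.+1 + (if odd a then 23 else 13).
Proof.
elim/ltn_ind: a => [[|[|a]]] IHa.
- by rewrite expn0 num_squares1.
- by rewrite expn1 num_squares_prime // num_unit_sqr_11.
- by rewrite num_squares_pow_rec // num_unit_sqr_11 mulnDr IHa //= negbK !expnS; lia.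
Qed.

Lemma eq_of_sqr_mod_prime_pow p a (r s : nat) : prime p -> r < p ^ a -> s < p ^ a ->
  ~~ (p %| r + s) -> ((p ^ a)%:Z %| (r%:Z ^+ 2 - s%:Z ^+ 2)%R)%Z -> r = s.
Proof.
move=> p_pr r_lt s_lt p_rs; rewrite subr_sqr -PoszD Gauss_dvdzl; last first.
  by rewrite coprimezE /= coprimeXl // prime_coprime.
have dist_lt : `|r%:Z - s%:Z|%N < p ^ a.
  by case: (leqP s r) => [/distnEl|/ltnW/distnEr] ->; lia.
rewrite dvdzE /= => pa_rs; apply/eqP; rewrite -distn_eq0.
by apply: contraLR pa_rs; rewrite -lt0n => rs_gt0; rewrite gtnNdvd.
Qed.

(** * Fibonacci residues modulo powers of 11 *)

Definition unit_slope_classes : seq nat := [seq j <- iota 0 10 | j != 5].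

Lemma fib_slope_unit_classes :
  all (fun j => ~~ (11 %| fib_slope fib j)) unit_slope_classes.
Proof. by []. Qed.

Lemma reached_fib_11pow a r :
  reached fib predT (11 ^ a.+1) r =
  (r %% 11 \in [seq fib j %% 11 | j <- unit_slope_classes]) ||
  reached fib (mod10_class 5) (11 ^ a.+1) r.
Proof.
have d11 : 11 %| 11 ^ a.+1 by rewrite expnS dvdn_mulr.
apply/asboolP/orP => [[n _ fn_r]|[/mapP[j j_ns r_j]|/asboolP[n _ fn_r]]]; last by exists n.
  have [n5|n_ns] := eqVneq (n %% 10) 5.
    by right; apply/asboolP; exists n => //; apply/eqP.
  left; apply/mapP; exists (n %% 10); first by rewrite mem_filter n_ns mem_iota ltn_mod.
  by rewrite -(modn_dvdm r d11) -fn_r modn_dvdm // fib_like_mod11.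
have j_lt : j < 10 by move: j_ns; rewrite mem_filter mem_iota => /andP[_ /andP[]].
have /(reached_fib_like_class a r fib_like_fib j_lt) := allP fib_slope_unit_classes j j_ns.
by rewrite r_j eqxx => /asboolP[n _ fn_r]; exists n.
Qed.

Lemma reached_fib_class5_mod11 a r :
  reached fib (mod10_class 5) (11 ^ a.+1) r -> r %% 11 = 5.
Proof.
move/(reached_dvdn (d := 11)); rewrite expnS dvdn_mulr // => /(_ isT).
by rewrite reached_fib_like_class_mod11 // => /eqP.
Qed.

Lemma lucas_sqr_mod m n r : odd n -> 0 < r -> fib n = r %[mod m] ->
  lucas n ^ 2 = 5 * r ^ 2 - 4 %[mod m].
Proof.
move=> n_odd r_gt0 fn_r; apply/eqP; rewrite -(eqn_modDr 4) subnK; last first.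
  by rewrite -[4]/(4 * 1) leq_mul // expn_gt0 r_gt0.
by rewrite -lucas_sqr_odd // -modnMmr -modnXm fn_r modnXm modnMmr.
Qed.

Lemma sqr_affine_inj_mod11pow a r s : r < 11 ^ a.+1 -> s < 11 ^ a.+1 ->
  r %% 11 = 5 -> s %% 11 = 5 -> 5 * r ^ 2 - 4 = 5 * s ^ 2 - 4 %[mod 11 ^ a.+1] -> r = s.
Proof.
move=> r_lt s_lt r5 s5 /eqP; rewrite -dvdz_mod_nat.
have ge4 x : x %% 11 = 5 -> 4 <= 5 * x ^ 2.
  by move=> x5; rewrite -[4]/(4 * 1) leq_mul // expn_gt0; case: x x5.
rewrite -!subzn ?ge4 // !(PoszM 5) !(PoszX _ 2).
have -> : (5 * r%:Z ^+ 2 - 4 - (5 * s%:Z ^+ 2 - 4) = 5 * (r%:Z ^+ 2 - s%:Z ^+ 2))%R.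
  by ring.
rewrite Gauss_dvdzr ?coprimezE //=; last by rewrite coprimeXl.
by apply: eq_of_sqr_mod_prime_pow => //; rewrite /dvdn -modnDm r5 s5.
Qed.

Lemma num_reached_fib_class5 a :
  num_reached fib (mod10_class 5) (11 ^ a.+1) =
  num_reached (fun n => lucas n ^ 2) (mod10_class 5) (11 ^ a.+1).
Proof.
have class5_odd n : mod10_class 5 n -> odd n.
  by move=> /eqP n5; rewrite (divn_eq n 10) n5 oddD oddM andbF.
have pos5 r : r %% 11 = 5 -> 0 < r by case: r.
rewrite /num_reached.
apply: (@count_iota_bij _ _ _ _ (fun r => (5 * r ^ 2 - 4) %% 11 ^ a.+1)).
- move=> r s /andP[r_lt /reached_fib_class5_mod11 r5] /andP[s_lt /reached_fib_class5_mod11 s5].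
  exact: sqr_affine_inj_mod11pow.
- move=> r r_lt fib_r; rewrite ltn_mod expn_gt0; split=> //.
  have [n n5 fn_r] := asboolP _ fib_r; apply/asboolP; exists n; rewrite // modn_mod.
  by apply: lucas_sqr_mod; rewrite ?class5_odd ?pos5 ?(reached_fib_class5_mod11 fib_r).
- move=> j j_lt /asboolP[n n5 ln_j].
  have fib_fn : reached fib (mod10_class 5) (11 ^ a.+1) (fib n %% 11 ^ a.+1).
    by apply/asboolP; exists n; rewrite ?modn_mod.
  exists (fib n %% 11 ^ a.+1); first by rewrite fib_fn ltn_mod expn_gt0.
  have fn_pos := pos5 _ (reached_fib_class5_mod11 fib_fn).
  by rewrite -(lucas_sqr_mod (class5_odd _ n5) fn_pos) ?modn_mod // ln_j modn_small.
Qed.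

Lemma reached_lucas_sqr_class5 a r :
  reached (fun n => lucas n ^ 2) (mod10_class 5) (11 ^ a.+1) r =
  reached (sqrn_mul 11) predT (11 ^ a.+1) r.
Proof.
apply/asboolP/asboolP => [[n /eqP n5 ln_r]|[l _ l_r]].
  have /dvdnP[l ln_eq] : 11 %| lucas n.
    by rewrite /dvdn (fib_like_mod11 _ fib_like_lucas) n5.
  by exists l; rewrite // -ln_r ln_eq mulnC.
have : reached lucas (mod10_class 5) (11 ^ a.+1) (11 * l).
  by rewrite (reached_fib_like_class _ _ fib_like_lucas) //= modnMr.
by case/asboolP=> n n5 ln_l; exists n; rewrite // -modnXm ln_l modnXm.
Qed.

Lemma num_reached_fib_11pow a :
  num_reached fib predT (11 ^ a.+1) = 11 ^ a * 6 + num_reached (sqrn_mul 11) predT (11 ^ a.+1).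
Proof.
rewrite /num_reached (eq_count (reached_fib_11pow a)) count_predU_disj; last first.
  move=> r; apply/negP => /andP[/mapP[j j_ns r_j] /reached_fib_class5_mod11].
  by rewrite r_j; apply/eqP; move: j j_ns {r_j}; apply/allP.
congr (_ + _); last first.
  rewrite -(eq_count (reached_lucas_sqr_class5 a)).
  exact: num_reached_fib_class5.
by rewrite expnSr count_iota_periodic // => r; rewrite modn_mod.
Qed.

Lemma num_fib_residuesE m : 0 < m -> num_fib_residues m = num_reached fib predT m.
Proof.
move=> m_gt0; rewrite /num_fib_residues.
set s := [seq r <- iota 0 m | reached fib predT m r].
have -> : fib_residues m = [set` [fset r in s]%fset]%classic.
  apply/seteqP; split=> r /=.
    move=> [n _ <-]; rewrite inE mem_filter mem_iota /= add0n ltn_mod m_gt0 andbT.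
    by apply/asboolP; exists n; rewrite ?modn_mod.
  rewrite inE mem_filter mem_iota /= add0n => /andP[/asboolP[n _ fn_r] r_lt].
  by exists n => //; rewrite fn_r modn_small.
by rewrite set_fsetK card_fseq undup_id ?size_filter // filter_uniq ?iota_uniq.
Qed.

Lemma num_fib_residues_11pow a :
  264 * num_fib_residues (11 ^ a.+1) = 145 * 11 ^ a.+1 + (if odd a then 143 else 253).
Proof.
rewrite num_fib_residuesE ?expn_gt0 // num_reached_fib_11pow.
case: a => [|a]; first by rewrite num_reached_sqr_mul_prime.
rewrite num_reached_sqr_mul // mulnDr.
by have := num_squares_11pow a; rewrite /= !expnS; case: (odd a) => /=; lia.
Qed.

Local Open Scope classical_set_scope.
Local Open Scope ring_scope.

Lemma fib_residue_density_11pow (R : realType) a :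
  (145%:R / 264%:R : R) <= (num_fib_residues (11 ^ a.+1)%N)%:R / ((11 ^ a.+1)%N)%:R
                        <= (145%:R / 264%:R + 11%:R^-1 ^+ a.+1 : R).
Proof.
set t : R := ((11 ^ a.+1)%N)%:R; have t_gt0 : 0 < t by rewrite ltr0n expn_gt0.
set c := if odd a then 143%N else 253%N; have c_le : (c <= 264)%N by rewrite /c; case: odd.
have -> : (num_fib_residues (11 ^ a.+1))%:R = (145%:R * t + c%:R) / 264%:R :> R.
  by rewrite -natrM -natrD -num_fib_residues_11pow natrM [264%:R * _]mulrC mulfK ?pnatr_eq0.
have -> : (145%:R * t + c%:R) / 264%:R / t = 145%:R / 264%:R + c%:R / 264%:R / t.
  by field; rewrite gt_eqF.
rewrite exprVn -natrX -/t lerDl lerD2l; apply/andP; split.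
  by rewrite !divr_ge0 // ltW.
by rewrite ler_pdivrMr // mulVf ?gt_eqF // ler_pdivrMr ?ltr0n // mul1r ler_nat.
Qed.

Theorem theorem5p7 (R : realType) :
  (fun a : nat => (num_fib_residues (11 ^ a)%N)%:R / ((11 ^ a)%N)%:R : R)
    @ \oo --> ((145%:R / 264%:R : R) : R^o).
Proof.
have inv11_lt1 : `|11%:R^-1 : R| < 1.
  by rewrite ger0_norm ?invr_ge0 ?ler0n // invf_lt1 ?ltr0n // ltr1n.
apply: (@squeeze_cvgr _ _ _ R (fun _ => 145%:R / 264%:R)
                              (fun a => 145%:R / 264%:R + 11%:R^-1 ^+ a)).
- by exists 1%N => // [[|a]] // _; apply: fib_residue_density_11pow.
- exact: (@cvg_cst R^o _ _ _ eventually_filter).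
- have := cvgD (@cvg_cst R^o (145%:R / 264%:R) _ _ eventually_filter) (cvg_expr inv11_lt1).
  by rewrite addr0; apply.
Qed.
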